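(* Let $\alpha\in(0,1]$ and $\beta\in(0,\alpha)$. Let $\Psi:\mathbb{R}^d\to\mathbb{R}^d$ send stable leaves to stable leaves and have finite best Lipschitz constant $L$. Then for every $K\in\mathcal{K}$, the function $K\circ\Psi$ belongs to $\mathcal{K}$ and $\|K\circ\Psi\|\le3\max(1,L)\|K\|$.
   Context: $\mathbb{R}^d=\mathbb{R}^{d_u}\times\mathbb{R}^{d_s}$ with points $(x,y)$; the stable leaves are the sets $\{x\}\times\mathbb{R}^{d_s}$, and $\Psi$ sends stable leaves to stable leaves if it maps each stable leaf into a stable leaf. $\mathcal{K}=\mathcal{K}^{\alpha,\beta}$ is the class of matrix-valued functions $K$ on $\mathbb{R}^d$ for which there is a constant $C$ such that for all $x,x'\in\mathbb{R}^{d_u}$, $y,y'\in\mathbb{R}^{d_s}$: $|K(x,y)|\le C$; $|K(x,y)-K(x',y)|\le C|x-x'|^\beta$; $|K(x,y)-K(x,y')|\le C|y-y'|^\alpha$; $|K(x,y)-K(x',y)-K(x,y')+K(x',y')|\le C|x-x'|^\beta|y-y'|^{\alpha-\beta}$. For $K\in\mathcal{K}$, $\|K\|$ is the smallest such $C$. *)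

From HB Require Import structures.
From mathcomp Require Import all_boot all_order all_algebra.
From mathcomp Require Import all_classical all_reals all_analysis.
Set Implicit Arguments. Unset Strict Implicit. Unset Printing Implicit Defensive.
Import Order.TTheory GRing.Theory Num.Theory.
Import numFieldNormedType.Exports.
Local Open Scope classical_set_scope.
Local Open Scope ring_scope.

Definition eucl (R : realType) (n : nat) (v : 'rV[R]_n) : R :=
  Num.sqrt (\sum_(i < n) (v ord0 i) ^+ 2).

(* R^d = R^{d_u} x R^{d_s}; points are pairs (x, y); Euclidean distance. *)
Definition pdist (R : realType) (du ds : nat)
  (p q : 'rV[R]_du * 'rV[R]_ds) : R :=
  Num.sqrt (eucl (p.1 - q.1) ^+ 2 + eucl (p.2 - q.2) ^+ 2).

(* Psi maps each stable leaf {x} x R^{d_s} into a stable leaf. *)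
Definition sends_stable_leaves (R : realType) (du ds : nat)
  (Psi : 'rV[R]_du * 'rV[R]_ds -> 'rV[R]_du * 'rV[R]_ds) : Prop :=
  forall x y y', (Psi (x, y)).1 = (Psi (x, y')).1.

Definition lipschitz_with (R : realType) (du ds : nat)
  (Psi : 'rV[R]_du * 'rV[R]_ds -> 'rV[R]_du * 'rV[R]_ds) (L : R) : Prop :=
  0 <= L /\ forall p q, pdist (Psi p) (Psi q) <= L * pdist p q.

Definition lip_const (R : realType) (du ds : nat)
  (Psi : 'rV[R]_du * 'rV[R]_ds -> 'rV[R]_du * 'rV[R]_ds) : R :=
  inf [set L | lipschitz_with Psi L].

(* C is an admissible constant for K in the class K^{alpha,beta};
   matrices carry the MathComp-Analysis norm (max of absolute entries). *)
Definition Kbound (R : realType) (du ds m n : nat) (alpha beta : R)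
  (K : 'rV[R]_du -> 'rV[R]_ds -> 'M[R]_(m, n)) (C : R) : Prop :=
  forall x x' y y',
    [/\ `|K x y| <= C,
        `|K x y - K x' y| <= C * (eucl (x - x')) `^ beta,
        `|K x y - K x y'| <= C * (eucl (y - y')) `^ alpha &
        `|K x y - K x' y - K x y' + K x' y'|
          <= C * (eucl (x - x')) `^ beta * (eucl (y - y')) `^ (alpha - beta)].

Definition inKclass (R : realType) (du ds m n : nat) (alpha beta : R)
  (K : 'rV[R]_du -> 'rV[R]_ds -> 'M[R]_(m, n)) : Prop :=
  exists C, Kbound alpha beta K C.

Definition Knorm (R : realType) (du ds m n : nat) (alpha beta : R)
  (K : 'rV[R]_du -> 'rV[R]_ds -> 'M[R]_(m, n)) : R :=
  inf [set C | Kbound alpha beta K C].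

Definition Kcomp (R : realType) (du ds m n : nat)
  (K : 'rV[R]_du -> 'rV[R]_ds -> 'M[R]_(m, n))
  (Psi : 'rV[R]_du * 'rV[R]_ds -> 'rV[R]_du * 'rV[R]_ds) :
  'rV[R]_du -> 'rV[R]_ds -> 'M[R]_(m, n) :=
  fun x y => K (Psi (x, y)).1 (Psi (x, y)).2.

From HB Require Import structures.
From mathcomp Require Import all_boot all_order all_algebra.
From mathcomp Require Import all_classical all_reals all_analysis.
Import Order.TTheory GRing.Theory Num.Theory.
Import numFieldNormedType.Exports.
From mathcomp Require Import lra.
Local Open Scope classical_set_scope.
Local Open Scope ring_scope.

(* The unstable coordinate of Psi (x, y) depends only on x, so every increment
   of K o Psi splits into increments of K along one coordinate at a time, with
   displacements at most L times those of (x, y).  The Hölder increment in x is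
   bounded both by 2||K|| and by ||K|| ((L dx)^beta + (L dx)^alpha), which
   interpolate to 2||K|| (L dx)^beta.  The mixed increment is bounded both via
   the mixed condition on K, by ||K|| (L dx)^beta (L dy)^(alpha-beta)
   + 2||K|| (L dx)^alpha, and via two Hölder increments in y, by
   2||K|| (L dy)^alpha; comparing L dx with L dy gives
   3||K|| (L dx)^beta (L dy)^(alpha-beta).  As L^r <= max(1, L) for r in
   [0, 1], 3 max(1, L) C is admissible for K o Psi whenever L is a Lipschitz
   constant of Psi and C is admissible for K; taking infima gives the bound. *)

Section PowerInequalities.
Variable R : realType.
Implicit Types (e t r L : R).

Lemma ler_powR_base r e t : 0 <= r -> 0 <= e -> e <= t -> e `^ r <= t `^ r.
Proof.
by move=> r0 e0 et; apply: ge0_ler_powR; rewrite // nnegrE (le_trans e0 et).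
Qed.

Lemma powR_le_max1 L r : 0 <= L -> 0 <= r -> r <= 1 -> L `^ r <= Num.max 1 L.
Proof.
move=> L0 r0 r1.
have LM : L <= Num.max 1 L by rewrite le_max lexx orbT.
apply: le_trans (ler_powR_base _ _ _ r0 L0 LM) _.
by apply: ler1_powR; rewrite ?le_max ?lexx.
Qed.

End PowerInequalities.

Arguments ler_powR_base {R r e t}.

Section HolderExponents.
Context {R : realType} {alpha beta : R}.
Hypotheses (beta_gt0 : 0 < beta) (beta_lt_alpha : beta < alpha).

Let alpha_gt0 : 0 < alpha := lt_trans beta_gt0 beta_lt_alpha.

Lemma powR_split t : t `^ alpha = t `^ beta * t `^ (alpha - beta).
Proof. by rewrite -powRD addrC subrK // gt_eqF. Qed.

Lemma le_interpolate_beta (C a X : R) : 0 <= C -> 0 <= a ->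
  X <= 2 * C -> X <= C * a `^ beta + C * a `^ alpha -> X <= 2 * C * a `^ beta.
Proof.
move=> C0 a0 X2C Xsplit.
have [a1|a1] := leP a 1; last first.
  have : 1 <= a `^ beta by rewrite -(powRr0 a) ler_powR ?(ltW a1) ?ltW.
  by nra.
have : a `^ alpha <= a `^ beta.
  have [->|an0] := eqVneq a 0; first by rewrite !powR0 ?gt_eqF.
  by apply: ger_powR; rewrite ?(ltW beta_lt_alpha) // lt_neqAle eq_sym an0 a0.
by nra.
Qed.

Lemma le_interpolate_mixed (C a b X : R) : 0 <= C -> 0 <= a -> 0 <= b ->
  X <= C * (a `^ beta * b `^ (alpha - beta)) + 2 * C * a `^ alpha ->
  X <= 2 * C * b `^ alpha ->
  X <= 3 * C * (a `^ beta * b `^ (alpha - beta)).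
Proof.
move=> C0 a0 b0 Xmixed Xy.
have gap_ge0 : 0 <= alpha - beta by rewrite subr_ge0 ltW.
have Q0 : 0 <= a `^ beta * b `^ (alpha - beta) by rewrite mulr_ge0 ?powR_ge0.
have [ab|ba] := leP a b.
  have : a `^ alpha <= a `^ beta * b `^ (alpha - beta).
    by rewrite powR_split ler_wpM2l ?powR_ge0 // ler_powR_base.
  by nra.
have : b `^ alpha <= a `^ beta * b `^ (alpha - beta).
  rewrite powR_split ler_wpM2r ?powR_ge0 //.
  exact: ler_powR_base (ltW beta_gt0) b0 (ltW ba).
have := mulr_ge0 C0 Q0.
by nra.
Qed.

End HolderExponents.

Arguments le_interpolate_beta {R alpha beta} _ _ {C a X}.
Arguments le_interpolate_mixed {R alpha beta} _ _ {C a b X}.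

Section Increments.
Context {V : zmodType}.
Implicit Types A B D E F G : V.

Lemma subr_via A B E : A - E = (A - B) + (B - E).
Proof. by rewrite addrA subrK. Qed.

Lemma mixed_diff_via A B D E F G :
  A - E - D + G = (A - B - D + F) + (B - E) - (F - G).
Proof.
rewrite opprB -!addrA; congr (_ + _).
rewrite [F + _]addrCA [F + (_ + _)]addrCA [F + (G - F)]addrC subrK.
by rewrite [- B + _]addrCA addKr addrCA.
Qed.

Lemma mixed_diff_swap A D E G : A - E - D + G = (A - D) - (E - G).
Proof.
by rewrite opprB -!addrA; congr (_ + _); rewrite addrCA [- E + G]addrC.
Qed.

End Increments.

Section ProductDistance.
Context {R : realType} {du ds : nat}.
Implicit Types p q : 'rV[R]_du * 'rV[R]_ds.

Lemma eucl_ge0 {k} (v : 'rV[R]_k) : 0 <= eucl v.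
Proof. exact: sqrtr_ge0. Qed.

Lemma sqrt_eucl_sqr {k} (v : 'rV[R]_k) : Num.sqrt (eucl v ^+ 2) = eucl v.
Proof. by rewrite sqrtr_sqr ger0_norm ?eucl_ge0. Qed.

Lemma eucl_subrr {k} (v : 'rV[R]_k) : eucl (v - v) = 0.
Proof. by rewrite subrr /eucl big1 ?sqrtr0 // => i _; rewrite mxE expr0n. Qed.

Lemma eucl_fst_le_pdist p q : eucl (p.1 - q.1) <= pdist p q.
Proof.
rewrite /pdist -{1}(sqrt_eucl_sqr (p.1 - q.1)) ler_sqrt ?addr_ge0 ?sqr_ge0 //.
by rewrite lerDl sqr_ge0.
Qed.

Lemma eucl_snd_le_pdist p q : eucl (p.2 - q.2) <= pdist p q.
Proof.
rewrite /pdist -{1}(sqrt_eucl_sqr (p.2 - q.2)) ler_sqrt ?addr_ge0 ?sqr_ge0 //.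
by rewrite lerDr sqr_ge0.
Qed.

Lemma pdist_pairl (x x' : 'rV[R]_du) (y : 'rV[R]_ds) :
  pdist (x, y) (x', y) = eucl (x - x').
Proof. by rewrite /pdist /= eucl_subrr expr0n addr0 sqrt_eucl_sqr. Qed.

Lemma pdist_pairr (x : 'rV[R]_du) (y y' : 'rV[R]_ds) :
  pdist (x, y) (x, y') = eucl (y - y').
Proof. by rewrite /pdist /= eucl_subrr expr0n add0r sqrt_eucl_sqr. Qed.

End ProductDistance.

Section KboundIncrements.
Context {R : realType} {du ds m n : nat} {alpha beta C : R}.
Context {K : 'rV[R]_du -> 'rV[R]_ds -> 'M[R]_(m, n)}.
Hypotheses (beta_gt0 : 0 < beta) (beta_lt_alpha : beta < alpha).
Hypothesis KC : Kbound alpha beta K C.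

Lemma Kbound_ge0 : 0 <= C.
Proof. by have [h _ _ _] := KC 0 0 0 0; apply: le_trans h. Qed.

Lemma Kbound_holder_x (a a' : 'rV[R]_du) (w : 'rV[R]_ds) (s : R) :
  eucl (a - a') <= s -> `|K a w - K a' w| <= C * s `^ beta.
Proof.
move=> es; have [_ hK _ _] := KC a a' w w; apply: le_trans hK _.
by rewrite ler_wpM2l ?Kbound_ge0 // (ler_powR_base (ltW beta_gt0) (eucl_ge0 _)).
Qed.

Lemma Kbound_holder_y (a : 'rV[R]_du) (w w' : 'rV[R]_ds) (t : R) :
  eucl (w - w') <= t -> `|K a w - K a w'| <= C * t `^ alpha.
Proof.
move=> et; have [_ _ hK _] := KC a a w w'; apply: le_trans hK _.
rewrite ler_wpM2l ?Kbound_ge0 // (ler_powR_base _ (eucl_ge0 _)) //.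
exact: ltW (lt_trans beta_gt0 beta_lt_alpha).
Qed.

Lemma Kbound_mixed (a a' : 'rV[R]_du) (w w' : 'rV[R]_ds) (s t : R) :
  eucl (a - a') <= s -> eucl (w - w') <= t ->
  `|K a w - K a' w - K a w' + K a' w'| <= C * (s `^ beta * t `^ (alpha - beta)).
Proof.
move=> es et; have [_ _ _ hK] := KC a a' w w'; apply: le_trans hK _.
rewrite -mulrA ler_wpM2l ?Kbound_ge0 // ler_pM ?powR_ge0 //.
  exact: ler_powR_base (ltW beta_gt0) (eucl_ge0 _) es.
by apply: ler_powR_base (eucl_ge0 _) et; rewrite subr_ge0 ltW.
Qed.

End KboundIncrements.

Section Composition.
Variables (R : realType) (du ds m n : nat) (alpha beta L C : R).
Variables (Psi : 'rV[R]_du * 'rV[R]_ds -> 'rV[R]_du * 'rV[R]_ds)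
          (K : 'rV[R]_du -> 'rV[R]_ds -> 'M[R]_(m, n)).
Hypotheses (alpha_le1 : alpha <= 1) (beta_gt0 : 0 < beta)
           (beta_lt_alpha : beta < alpha).
Hypotheses (Psi_leaves : sends_stable_leaves Psi)
           (Psi_lip : lipschitz_with Psi L) (KC : Kbound alpha beta K C).

Let alpha_gt0 : 0 < alpha := lt_trans beta_gt0 beta_lt_alpha.
Let beta_le1 : beta <= 1 := le_trans (ltW beta_lt_alpha) alpha_le1.
Let L_ge0 : 0 <= L := Psi_lip.1.
Let C_ge0 : 0 <= C := Kbound_ge0 KC.

Local Notation u x := (Psi (x, 0)).1.
Local Notation v x y := (Psi (x, y)).2.

Lemma Kcomp_leafE x y : Kcomp K Psi x y = K (u x) (v x y).
Proof. by rewrite /Kcomp (Psi_leaves x y 0). Qed.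

Lemma lip_fst_x x x' : eucl (u x - u x') <= L * eucl (x - x').
Proof.
rewrite -(pdist_pairl x x' (0 : 'rV[R]_ds)); apply: le_trans (Psi_lip.2 _ _).
exact: eucl_fst_le_pdist.
Qed.

Lemma lip_snd_x x x' y : eucl (v x y - v x' y) <= L * eucl (x - x').
Proof.
rewrite -(pdist_pairl x x' y); apply: le_trans (Psi_lip.2 _ _).
exact: eucl_snd_le_pdist.
Qed.

Lemma lip_snd_y x y y' : eucl (v x y - v x y') <= L * eucl (y - y').
Proof.
rewrite -(pdist_pairr x y y'); apply: le_trans (Psi_lip.2 _ _).
exact: eucl_snd_le_pdist.
Qed.

Lemma ler_scale_max1 (k Lr d : R) : 0 <= k -> k <= 3 -> 0 <= Lr ->
  Lr <= Num.max 1 L -> 0 <= d -> k * C * (Lr * d) <= 3 * Num.max 1 L * C * d.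
Proof.
move=> k0 k3 Lr0 LrM d0.
rewrite mulrACA -[X in _ <= X]mulrA.
by apply: ler_wpM2r; rewrite ?mulr_ge0 // ler_pM.
Qed.

Lemma Kcomp_norm_le x y : `|Kcomp K Psi x y| <= 3 * Num.max 1 L * C.
Proof.
have [hK _ _ _] := KC (u x) (u x) (v x y) (v x y).
have M1 : 1 <= Num.max 1 L by rewrite le_max lexx.
rewrite Kcomp_leafE; apply: le_trans hK _.
by rewrite ler_peMl // (le_trans M1) // ler_peMl ?ler1n // (le_trans ler01 M1).
Qed.

Lemma Kcomp_holder_x x x' y :
  `|Kcomp K Psi x y - Kcomp K Psi x' y|
    <= 3 * Num.max 1 L * C * eucl (x - x') `^ beta.
Proof.
rewrite !Kcomp_leafE.
set X := `|_|; set dx := eucl (x - x').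
have [Kxy_le _ _ _] := KC (u x) (u x) (v x y) (v x y).
have [Kx'y_le _ _ _] := KC (u x') (u x') (v x' y) (v x' y).
have X_sup : X <= 2 * C by apply: le_trans (ler_normB _ _) _; lra.
have X_steps : X <= C * (L * dx) `^ beta + C * (L * dx) `^ alpha.
  rewrite /X (subr_via _ (K (u x') (v x y))); apply: le_trans (ler_normD _ _) _.
  apply: lerD; first exact: Kbound_holder_x beta_gt0 KC _ _ _ _ (lip_fst_x x x').
  exact: Kbound_holder_y beta_gt0 beta_lt_alpha KC _ _ _ _ (lip_snd_x x x' y).
have dx0 : 0 <= dx := eucl_ge0 _.
apply: le_trans (le_interpolate_beta beta_gt0 beta_lt_alpha C_ge0
  (mulr_ge0 L_ge0 dx0) X_sup X_steps) _.
by rewrite powRM // ler_scale_max1 ?powR_ge0 ?powR_le_max1 ?ler_nat // ltW.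
Qed.

Lemma Kcomp_holder_y x y y' :
  `|Kcomp K Psi x y - Kcomp K Psi x y'|
    <= 3 * Num.max 1 L * C * eucl (y - y') `^ alpha.
Proof.
rewrite !Kcomp_leafE.
apply: le_trans
  (Kbound_holder_y beta_gt0 beta_lt_alpha KC _ _ _ _ (lip_snd_y x y y')) _.
rewrite powRM ?eucl_ge0 // -[C * _]mul1r mulrA.
by rewrite ler_scale_max1 ?powR_ge0 ?powR_le_max1 ?ler01 ?ler1n ?eucl_ge0 // ltW.
Qed.

Lemma Kcomp_mixed x x' y y' :
  `|Kcomp K Psi x y - Kcomp K Psi x' y - Kcomp K Psi x y' + Kcomp K Psi x' y'|
    <= 3 * Num.max 1 L * C * eucl (x - x') `^ beta
         * eucl (y - y') `^ (alpha - beta).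
Proof.
rewrite !Kcomp_leafE.
set X := `|_|; set dx := eucl (x - x'); set dy := eucl (y - y').
have dx0 : 0 <= dx := eucl_ge0 _.
have dy0 : 0 <= dy := eucl_ge0 _.
have holder_y := Kbound_holder_y beta_gt0 beta_lt_alpha KC.
have X_mixed : X <= C * ((L * dx) `^ beta * (L * dy) `^ (alpha - beta))
                    + 2 * C * (L * dx) `^ alpha.
  rewrite /X (mixed_diff_via _ (K (u x') (v x y)) _ _ (K (u x') (v x y'))).
  apply: le_trans (ler_normB _ _) _.
  rewrite -mulrA -[2]/(1 + 1) mulrDl mul1r [X in _ <= X]addrA.
  apply: lerD; last exact: holder_y _ _ _ _ (lip_snd_x x x' y').
  apply: le_trans (ler_normD _ _) _.
  apply: lerD; last exact: holder_y _ _ _ _ (lip_snd_x x x' y).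
  exact: Kbound_mixed beta_gt0 beta_lt_alpha KC _ _ _ _ _ _
    (lip_fst_x x x') (lip_snd_y x y y').
have X_y : X <= 2 * C * (L * dy) `^ alpha.
  rewrite /X mixed_diff_swap; apply: le_trans (ler_normB _ _) _.
  rewrite -mulrA -[2]/(1 + 1) mulrDl mul1r.
  by apply: lerD; apply: holder_y; apply: lip_snd_y.
apply: le_trans (le_interpolate_mixed beta_gt0 beta_lt_alpha C_ge0
  (mulr_ge0 L_ge0 dx0) (mulr_ge0 L_ge0 dy0) X_mixed X_y) _.
rewrite !powRM // (mulrACA (L `^ beta)) -(powR_split beta_gt0 beta_lt_alpha).
rewrite -[X in _ <= X]mulrA.
by rewrite ler_scale_max1 ?mulr_ge0 ?powR_ge0 ?powR_le_max1 // ltW.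
Qed.

Lemma Kbound_Kcomp : Kbound alpha beta (Kcomp K Psi) (3 * Num.max 1 L * C).
Proof.
move=> x x' y y'; split.
- exact: Kcomp_norm_le.
- exact: Kcomp_holder_x.
- exact: Kcomp_holder_y.
- exact: Kcomp_mixed.
Qed.

End Composition.

Arguments Kbound_Kcomp {R du ds m n alpha beta L C Psi K}.

Section InfimumBounds.
Context {R : realType}.
Implicit Types (A : set R) (c x : R).

Lemma le_mul_inf A c x : 0 <= c -> A !=set0 ->
  (forall a, A a -> x <= c * a) -> x <= c * inf A.
Proof.
move=> + [a0 Aa0] xA; rewrite le0r => /orP[/eqP c0|cpos].
  by have := xA _ Aa0; rewrite c0 !mul0r.
rewrite -ler_pdivrMl //; apply: lb_le_inf; first by exists a0.
by move=> a Aa; rewrite ler_pdivrMl // xA.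
Qed.

Lemma le_mul_max1_inf A c x : 0 <= c -> A !=set0 ->
  (forall a, A a -> x <= c * Num.max 1 a) -> x <= c * Num.max 1 (inf A).
Proof.
move=> c0 A0 xA; have [xc|cx] := leP x c.
  by apply: le_trans xc _; rewrite ler_peMr // le_max lexx.
have xA' a : A a -> x <= c * a.
  move=> Aa; have := xA a Aa; have [_ xc|//] := leP a 1.
  by have := lt_le_trans cx xc; rewrite mulr1 ltxx.
apply: le_trans (le_mul_inf _ _ _ c0 A0 xA') _.
by rewrite ler_wpM2l // le_max lexx orbT.
Qed.

End InfimumBounds.

Theorem mainTheorem11 (R : realType) (du ds m n : nat) (alpha beta : R)
  (Psi : 'rV[R]_du * 'rV[R]_ds -> 'rV[R]_du * 'rV[R]_ds)
  (K : 'rV[R]_du -> 'rV[R]_ds -> 'M[R]_(m, n)) :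
  0 < alpha -> alpha <= 1 -> 0 < beta -> beta < alpha ->
  sends_stable_leaves Psi ->
  (exists L0, lipschitz_with Psi L0) ->
  inKclass alpha beta K ->
  inKclass alpha beta (Kcomp K Psi) /\
  Knorm alpha beta (Kcomp K Psi)
    <= 3 * Num.max 1 (lip_const Psi) * Knorm alpha beta K.
Proof.
move=> _ a1 b0 ba leaves [L0 lipL0] [C0 KC0].
have KcompC L C : lipschitz_with Psi L -> Kbound alpha beta K C ->
    Kbound alpha beta (Kcomp K Psi) (3 * Num.max 1 L * C).
  exact: Kbound_Kcomp a1 b0 ba leaves.
split; first by exists (3 * Num.max 1 L0 * C0); exact: KcompC.
have Kcomp_lb : has_lbound [set C | Kbound alpha beta (Kcomp K Psi) C].
  by exists 0 => C; exact: Kbound_ge0.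
have Knorm_ge0 : 0 <= Knorm alpha beta K.
  by apply: lb_le_inf; [exists C0 | move=> C; exact: Kbound_ge0].
have by_L L : lipschitz_with Psi L ->
    Knorm alpha beta (Kcomp K Psi) <= 3 * Num.max 1 L * Knorm alpha beta K.
  move=> lipL; apply: le_mul_inf;
    [by rewrite mulr_ge0 // le_max ler01 | by exists C0 |].
  by move=> C KC; apply: (ge_inf Kcomp_lb); exact: KcompC.
rewrite mulrAC; apply: le_mul_max1_inf; [by rewrite mulr_ge0 | by exists L0 |].
by move=> L lipL; rewrite -mulrAC; exact: by_L.
Qed.
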